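(* Let $\mathcal{X}$ be a set of nonempty causally complete open subsets of $\mathbb{R}^{1+s}$ satisfying the following two properties: ($\mathbf{c2}_1$) for any $X\in\mathcal{X}$ and $X_0\in\mathcal{X}$ with $X_0\subset X$, there exists $X_{00}\in\mathcal{X}$ with $X_{00}\subset X_0$ such that $\mathcal{X}(X\cap X_{00}')$ is nonempty and connected; ($\mathbf{c2}_2$) for any $X\in\mathcal{X}$ and $X_1,X_2\in\mathcal{X}$ with $X_1,X_2\subset X$, there exist $X_{10},X_{20}\in\mathcal{X}$ with $X_{10}\subset X_1$, $X_{20}\subset X_2$ such that $\mathcal{X}(X\cap X_{10}'\cap X_{20}')$ is nonempty. Then for every $X\in\mathcal{X}$ the set $\mathcal{X}^{(2)}_\times(X)$ is nonempty and connected.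
   Context: $R'$ denotes the causal complement of $R\subset\mathbb{R}^{1+s}$; $X_1\perp X_2$ (causal disjointness) means $(x_1-x_2)^2<0$ for all $x_1\in X_1,x_2\in X_2$ (Minkowski metric with signature $(+,-,\dots,-)$). For $R\subset\mathbb{R}^{1+s}$: $\mathcal{X}(R)=\{X\in\mathcal{X}: X\subset R\}$, half-ordered by inclusion, and $\mathcal{X}^{(2)}_\times(R)=\{(X_1,X_2)\in\mathcal{X}(R)\times\mathcal{X}(R): X_1\perp X_2\}$, half-ordered by componentwise inclusion. A path of length $N$ in a half-ordered set $(A,\subset)$ is a sequence $a_0,\dots,a_N\in A$ with $a_{j-1}\subset a_j$ or $a_j\subset a_{j-1}$ for each $j$; $A$ is connected if any two of its elements are joined by a path of finite length. *)

From HB Require Import structures.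
From mathcomp Require Import all_boot all_order all_algebra.
From mathcomp Require Import all_classical all_reals all_analysis.
From mathcomp Require Import Rstruct Rstruct_topology.
From Stdlib Require Import Rdefinitions.
Set Implicit Arguments. Unset Strict Implicit. Unset Printing Implicit Defensive.
Import Order.TTheory GRing.Theory Num.Theory.
Local Open Scope classical_set_scope.
Local Open Scope ring_scope.

(* Points of Minkowski space R^{1+s}: row vectors of length s+1, index 0 = time. *)
Notation mpt s := 'rV[R]_(s.+1).

Definition mink (s : nat) (v : mpt s) : R :=
  v ord0 ord0 ^+ 2 - \sum_(i < s) v ord0 (lift ord0 i) ^+ 2.

Definition ccompl (s : nat) (A : set (mpt s)) : set (mpt s) :=
  [set x | forall y, A y -> mink (x - y) < 0].

Definition cperp (s : nat) (A B : set (mpt s)) : Prop :=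
  forall x1 x2, A x1 -> B x2 -> mink (x1 - x2) < 0.

Definition causally_complete (s : nat) (A : set (mpt s)) : Prop :=
  ccompl (ccompl A) = A.

Definition Xin (s : nat) (XX : set (set (mpt s))) (A : set (mpt s)) :
  set (set (mpt s)) := [set Y | XX Y /\ Y `<=` A].

Definition X2in (s : nat) (XX : set (set (mpt s))) (A : set (mpt s)) :
  set (set (mpt s) * set (mpt s)) :=
  [set p | XX p.1 /\ XX p.2 /\ p.1 `<=` A /\ p.2 `<=` A /\ cperp p.1 p.2].

Definition pair_incl (s : nat) (p q : set (mpt s) * set (mpt s)) : Prop :=
  p.1 `<=` q.1 /\ p.2 `<=` q.2.

Definition hconnected (T : Type) (le : T -> T -> Prop) (A : set T) : Prop :=
  forall a b, A a -> A b ->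
    exists (N : nat) (f : nat -> T),
      f 0%N = a /\ f N = b /\ (forall j : nat, leq j N -> A (f j)) /\
      (forall j : nat, ltn 0 j -> leq j N -> le (f j.-1) (f j) \/ le (f j) (f j.-1)).

From HB Require Import structures.
From mathcomp Require Import all_boot all_order all_algebra.
From mathcomp Require Import all_classical all_reals all_analysis.
From mathcomp Require Import Rstruct Rstruct_topology.
From Stdlib Require Import Rdefinitions.
From mathcomp Require Import zify.
Set Implicit Arguments. Unset Strict Implicit.
Local Open Scope classical_set_scope.

(* Two pairs with the same second member B are joined by shrinking B to the
   B00 given by (c2_1): (A, B) and (A', B) dominate (A, B00) and (A', B00),
   whose first members both lie in the connected set X(X ∩ B00'); by symmetry
   the same holds for pairs with a common first member.  For arbitrary pairs
   (X1, X2) and (Y1, Y2), (c2_2) yields X20 ⊆ X2, Y20 ⊆ Y2 and Z causally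
   disjoint from both, and the path
     (X1, X2) ⊇ (X1, X20) ~ (Z, X20) ~ (Z, Y20) ~ (Y1, Y20) ⊆ (Y1, Y2)
   changes one member at a time. *)

Section Paths.
Variables (T : Type) (le : T -> T -> Prop) (A : set T).

Definition hjoined (a b : T) : Prop :=
  exists (N : nat) (f : nat -> T),
    f 0%N = a /\ f N = b /\ (forall j : nat, (j <= N)%N -> A (f j)) /\
    (forall j : nat, (0 < j)%N -> (j <= N)%N ->
       le (f j.-1) (f j) \/ le (f j) (f j.-1)).

Lemma hjoined_step a b : A a -> A b -> le a b \/ le b a -> hjoined a b.
Proof.
move=> Aa Ab le_ab; exists 1%N, (fun j => if j == 0%N then a else b).
by do 2!split=> //; split; [case=> [|[]] | case=> [|[|]]].
Qed.

Lemma hjoined_sym a b : hjoined a b -> hjoined b a.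
Proof.
move=> [N [f [f0 [fN [fA fle]]]]]; exists N, (fun j => f (N - j)%N).
rewrite subn0 subnn; do 2!split=> //.
split=> [j _|j j_gt0 jN]; first exact/fA/leq_subr.
have -> : (N - j.-1)%N = (N - j).+1 by lia.
by have /= := fle (N - j).+1 isT ltac:(lia); tauto.
Qed.

Lemma hjoined_trans a b c : hjoined a b -> hjoined b c -> hjoined a c.
Proof.
move=> [N1 [f1 [f10 [f1N [f1A f1le]]]]] [N2 [f2 [f20 [f2N [f2A f2le]]]]].
pose f j := if (j <= N1)%N then f1 j else f2 (j - N1)%N.
have f_right j : (N1 <= j)%N -> f j = f2 (j - N1)%N.
  rewrite /f; case: (leqP j N1) => // j_le N1_le.
  have -> : j = N1 by lia.
  by rewrite subnn f1N f20.
exists (N1 + N2)%N, f; split; first by rewrite /f leq0n.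
split; first by rewrite f_right ?leq_addr // addKn.
split=> [j jN|j j_gt0 jN].
  by rewrite /f; case: leqP => ?; [exact: f1A | apply: f2A; lia].
case: (leqP j N1) => jN1.
  by rewrite /f jN1 (_ : j.-1 <= N1)%N; [exact: f1le | lia].
rewrite !f_right; try lia.
have -> : (j.-1 - N1)%N = (j - N1)%N.-1 by lia.
apply: f2le; lia.
Qed.

End Paths.

Lemma hjoined_map (T U : Type) (le : T -> T -> Prop) (le' : U -> U -> Prop)
    (A : set T) (A' : set U) (g : T -> U) a b :
  (forall x, A x -> A' (g x)) ->
  (forall x y, A x -> A y -> le x y -> le' (g x) (g y)) ->
  hjoined le A a b -> hjoined le' A' (g a) (g b).
Proof.
move=> gA gle [N [f [f0 [fN [fA fle]]]]].
exists N, (g \o f); rewrite /= f0 fN; do 2!split=> //.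
split=> [j jN|j j_gt0 jN]; first exact/gA/fA.
have jN' : (j.-1 <= N)%N by lia.
by case: (fle j j_gt0 jN) => ?; [left|right]; apply: gle => //; apply: fA.
Qed.

Lemma minkN (s : nat) (v : mpt s) : mink (- v) = mink v.
Proof.
rewrite /mink !mxE GRing.sqrrN; congr (_ - _)%R.
by apply: eq_bigr => i _; rewrite mxE GRing.sqrrN.
Qed.

Lemma cperp_sym (s : nat) (A B : set (mpt s)) : cperp A B -> cperp B A.
Proof. by move=> AB x y Bx Ay; rewrite -minkN GRing.opprB; apply: AB. Qed.

Section CausallyDisjointPairs.
Variables (s : nat) (XX : set (set (mpt s))) (X : set (mpt s)).

Lemma X2in_swap A B : X2in XX X (A, B) -> X2in XX X (B, A).
Proof. by move=> [XA [XB [AX [BX /cperp_sym]]]]. Qed.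

Lemma X2inSr A B B0 : XX B0 -> B0 `<=` B -> X2in XX X (A, B) -> X2in XX X (A, B0).
Proof.
move=> XB0 B0B [XA [_ [AX [BX AB]]]]; do 2!split=> //.
by split=> //; split=> [x /B0B/BX|x y Ax /B0B]; last exact: AB.
Qed.

Lemma X2in_ccompl A B :
  XX B -> B `<=` X -> Xin XX (X `&` ccompl B) A -> X2in XX X (A, B).
Proof.
move=> XB BX [XA AXB]; do 3!split=> //; first by move=> x /AXB [].
by split=> // x y /AXB [_]; apply.
Qed.

Lemma Xin_ccompl A B B0 :
  B0 `<=` B -> X2in XX X (A, B) -> Xin XX (X `&` ccompl B0) A.
Proof.
move=> B0B [XA [_ [AX [_ AB]]]]; split=> // x Ax.
by split=> [|y /B0B]; [exact: AX | exact: AB].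
Qed.

Hypothesis XXX : XX X.
Hypothesis c21 : forall X0, XX X0 -> X0 `<=` X ->
  exists X00, XX X00 /\ X00 `<=` X0 /\
    Xin XX (X `&` ccompl X00) !=set0 /\
    hconnected (@subset (mpt s)) (Xin XX (X `&` ccompl X00)).

Lemma X2in_nonempty : X2in XX X !=set0.
Proof.
have [X00 [XX00 [X00X [[Y XY] _]]]] := c21 XXX (@subset_refl _ X).
by exists (Y, X00); apply: X2in_ccompl.
Qed.

Lemma X2in_joined_fst A A' B : X2in XX X (A, B) -> X2in XX X (A', B) ->
  hjoined (@pair_incl s) (X2in XX X) (A, B) (A', B).
Proof.
move=> AB A'B; have [_ [XB [_ [BX _]]]] := A'B.
have [B0 [XB0 [B0B [_ B0conn]]]] := c21 XB BX.
have B0X : B0 `<=` X := subset_trans B0B BX.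
apply: (hjoined_trans (b := (A, B0))).
  by apply: hjoined_step => //; [exact: X2inSr AB | right; split].
apply: (hjoined_trans (b := (A', B0))); last first.
  by apply: hjoined_step => //; [exact: X2inSr A'B | left; split].
apply: (@hjoined_map _ _ (@subset _) _ _ _ (fun Z => (Z, B0))).
- by move=> Z; apply: X2in_ccompl.
- by move=> ? ? _ _ ZZ'; split.
- exact: B0conn (Xin_ccompl B0B AB) (Xin_ccompl B0B A'B).
Qed.

Lemma X2in_joined_snd A B B' : X2in XX X (A, B) -> X2in XX X (A, B') ->
  hjoined (@pair_incl s) (X2in XX X) (A, B) (A, B').
Proof.
move=> /X2in_swap BA /X2in_swap B'A.
apply: (@hjoined_map _ _ _ _ _ _ (fun p => (p.2, p.1)) (B, A) (B', A)
         _ _ (X2in_joined_fst BA B'A)).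
- by case=> ? ? /X2in_swap.
- by move=> [? ?] [? ?] _ _ [].
Qed.

Hypothesis c22 : forall X1 X2, XX X1 -> XX X2 -> X1 `<=` X -> X2 `<=` X ->
  exists X10 X20, XX X10 /\ XX X20 /\ X10 `<=` X1 /\ X20 `<=` X2 /\
    Xin XX (X `&` ccompl X10 `&` ccompl X20) !=set0.

Lemma X2in_connected : hconnected (@pair_incl s) (X2in XX X).
Proof.
move=> [X1 X2] [Y1 Y2] X12 Y12.
have [_ [XX2 [_ [X2X _]]]] := X12; have [_ [XY2 [_ [Y2X _]]]] := Y12.
have [X20 [Y20 [XX20 [XY20 [X20X2 [Y20Y2 [Z [XZ ZXX20Y20]]]]]]]] :=
  c22 XX2 XY2 X2X Y2X.
have Z_X20 : X2in XX X (Z, X20).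
  apply: X2in_ccompl => //; first exact: subset_trans X20X2 X2X.
  by split=> // z /ZXX20Y20 [].
have Z_Y20 : X2in XX X (Z, Y20).
  apply: X2in_ccompl => //; first exact: subset_trans Y20Y2 Y2X.
  by split=> // z /ZXX20Y20 [[Xz _] Y20z]; split.
have X1_X20 := X2inSr XX20 X20X2 X12; have Y1_Y20 := X2inSr XY20 Y20Y2 Y12.
apply: (hjoined_trans (b := (X1, X20))).
  by apply: hjoined_step => //; right; split.
apply: (hjoined_trans (X2in_joined_fst X1_X20 Z_X20)).
apply: (hjoined_trans (X2in_joined_snd Z_X20 Z_Y20)).
apply: (hjoined_trans (X2in_joined_fst Z_Y20 Y1_Y20)).
by apply: hjoined_step => //; left; split.
Qed.

End CausallyDisjointPairs.

Theorem proposition3p3 (s : nat) (XX : set (set (mpt s)))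
  (HX : forall X, XX X -> X !=set0 /\ causally_complete X /\ open X)
  (c21 : forall X X0, XX X -> XX X0 -> X0 `<=` X ->
     exists X00, XX X00 /\ X00 `<=` X0 /\
       Xin XX (X `&` ccompl X00) !=set0 /\
       hconnected (@subset (mpt s)) (Xin XX (X `&` ccompl X00)))
  (c22 : forall X X1 X2, XX X -> XX X1 -> XX X2 -> X1 `<=` X -> X2 `<=` X ->
     exists X10 X20, XX X10 /\ XX X20 /\ X10 `<=` X1 /\ X20 `<=` X2 /\
       Xin XX (X `&` ccompl X10 `&` ccompl X20) !=set0) :
  forall X, XX X ->
    X2in XX X !=set0 /\ hconnected (@pair_incl s) (X2in XX X).
Proof.
move=> X XXX; split.
  exact: X2in_nonempty XXX (fun X0 => c21 X X0 XXX).
exact: X2in_connected (fun X0 => c21 X X0 XXX) (fun X1 X2 => c22 X X1 X2 XXX).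
Qed.
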